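(* Let $n,m\ge 2$ and suppose $\gamma_{2t}(K_n\Box K_m)<2\min\{n,m\}$. Let $S$ be any total $2$-dominating set of $K_n\Box K_m$ with $|S|=\gamma_{2t}(K_n\Box K_m)$. Then: (1) for every $v\in V(K_n)$, $S\cap(\{v\}\times V(K_m))\neq\emptyset$, and for every $w\in V(K_m)$, $S\cap(V(K_n)\times\{w\})\neq\emptyset$; (2) there exists $v\in V(K_n)$ with $|S\cap(\{v\}\times V(K_m))|\ge 3$, and there exists $w\in V(K_m)$ with $|S\cap(V(K_n)\times\{w\})|\ge 3$.
   Context: For a graph $G=(V,E)$, a set $S\subseteq V$ is a total $2$-dominating set if every vertex of $V$ (including those in $S$) is adjacent to at least $2$ vertices of $S$; $\gamma_{2t}(G)$ is the minimum cardinality of such a set. $G\Box H$ denotes the Cartesian product: vertex set $V(G)\times V(H)$, with $(u_1,v_1)\sim(u_2,v_2)$ iff either $u_1=u_2$ and $v_1\sim v_2$, or $v_1=v_2$ and $u_1\sim u_2$. $K_n$ is the complete graph on $n$ vertices; $V(K_n)=\{v_1,\dots,v_n\}$, $V(K_m)=\{w_1,\dots,w_m\}$. *)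

From mathcomp Require Import all_boot.
Set Implicit Arguments. Unset Strict Implicit. Unset Printing Implicit Defensive.

(* Vertices of K_n □ K_m are pairs (i, j) : 'I_n * 'I_m. *)
Definition rook_adj (n m : nat) (x y : 'I_n * 'I_m) : bool :=
  ((x.1 == y.1) && (x.2 != y.2)) || ((x.2 == y.2) && (x.1 != y.1)).

Definition total2dom (n m : nat) (S : {set 'I_n * 'I_m}) : bool :=
  [forall x, 2 <= #|[set y in S | rook_adj x y]|].

(* gamma_{2t}(K_n □ K_m): minimum size of a total 2-dominating set
   (default value #|V| is only relevant if none exists). *)
Definition gamma2t (n m : nat) : nat :=
  \big[minn/#|[set: 'I_n * 'I_m]|]_(A : {set 'I_n * 'I_m} | total2dom A) #|A|.

(* Every vertex (v, w) of K_n □ K_m sees S only through its row {v} × V(K_m) and its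
   column V(K_n) × {w}.  If a row contained no vertex of S, the two S-neighbours of
   each vertex of that row would lie in its column, so every column would hold two
   vertices of S and |S| >= 2m.  If every row held at most two vertices of S, then for
   a vertex x of S in a given column (such an x exists by the previous point, applied
   to columns) the row of x supplies at most one S-neighbour, so the column of x holds
   x and at least one more vertex of S; again |S| >= 2m.  Transposition gives the
   column statements. *)
From mathcomp Require Import all_boot.
From mathcomp Require Import zify.
Set Implicit Arguments. Unset Strict Implicit. Unset Printing Implicit Defensive.

Lemma card_ge_of_fibres (T U : finType) (f : T -> U) (S : {set T}) (k : nat) :
  (forall u : U, k <= #|[set x in S | f x == u]|) -> k * #|U| <= #|S|.
Proof.
move=> fibre_ge.
have -> : #|S| = \sum_(u : U) #|[set x in S | f x == u]|.
  rewrite -sum1_card (partition_big f xpredT) //=.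
  by apply: eq_bigr => u _; rewrite -sum1_card; apply: eq_bigl => x; rewrite inE.
by rewrite mulnC -sum_nat_const; apply: leq_sum => u _; exact: fibre_ge.
Qed.

Section Transpose.

Variables T U : finType.

Definition transpose_set (S : {set T * U}) : {set U * T} := [set x | (x.2, x.1) \in S].

Lemma mem_transpose_set (S : {set T * U}) a b :
  ((b, a) \in transpose_set S) = ((a, b) \in S).
Proof. by rewrite inE. Qed.

Lemma card_transpose_set (S : {set T * U}) : #|transpose_set S| = #|S|.
Proof.
have swapK : cancel (fun x : T * U => (x.2, x.1)) (fun y => (y.2, y.1)) by case.
have swapK_rev : cancel (fun y : U * T => (y.2, y.1)) (fun x => (x.2, x.1)) by case.
by rewrite -(card_imset S (can_inj swapK)) (can2_imset_pre S swapK swapK_rev).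
Qed.

Lemma transpose_setI (S : {set T * U}) (P : pred (U * T)) :
  [set x in transpose_set S | P x] = transpose_set [set y in S | P (y.2, y.1)].
Proof. by apply/setP => -[a b]; rewrite !inE. Qed.

End Transpose.

Section RookGraph.

Variables n m : nat.

Lemma rook_adj_transpose (x y : 'I_n * 'I_m) :
  rook_adj (x.2, x.1) (y.2, y.1) = rook_adj x y.
Proof. by rewrite /rook_adj /= orbC. Qed.

Lemma total2dom_transpose (S : {set 'I_n * 'I_m}) :
  total2dom S -> total2dom (transpose_set S).
Proof.
move=> /forallP dom; apply/forallP => x.
rewrite transpose_setI card_transpose_set.
have -> : [set y in S | rook_adj x (y.2, y.1)] = [set y in S | rook_adj (x.2, x.1) y].
  by apply/setP => y; rewrite !inE -rook_adj_transpose; case: x.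
exact: dom.
Qed.

Lemma rook_nbhd_subset (S : {set 'I_n * 'I_m}) (x : 'I_n * 'I_m) :
  [set y in S | rook_adj x y] \subset
  ([set y in S | y.1 == x.1] :\ x) :|: ([set y in S | y.2 == x.2] :\ x).
Proof.
apply/subsetP; case: x => v w [a b]; rewrite !inE /rook_adj /= !xpair_eqE.
case/andP=> -> /orP[] /andP[/eqP-> ne];
  by rewrite eqxx ?(eq_sym a) ?(eq_sym b) (negbTE ne) ?orbT.
Qed.

Lemma total2dom_row_col (S : {set 'I_n * 'I_m}) (x : 'I_n * 'I_m) : total2dom S ->
  2 <= #|[set y in S | y.1 == x.1] :\ x| + #|[set y in S | y.2 == x.2] :\ x|.
Proof.
move=> /forallP dom; apply: leq_trans (dom x) _.
by apply: leq_trans (subset_leq_card (rook_nbhd_subset S x)) (leq_card_setU _ _).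
Qed.

Variable S : {set 'I_n * 'I_m}.
Hypothesis domS : total2dom S.
Hypothesis small_S : #|S| < 2 * m.

Lemma total2dom_row_meets (v : 'I_n) : exists w : 'I_m, (v, w) \in S.
Proof.
apply/existsP; apply: contraLR small_S; rewrite -leqNgt => /existsPn row_v_empty.
rewrite -[m in 2 * m]card_ord; apply: (card_ge_of_fibres (f := snd)) => w.
have row0 : [set y in S | y.1 == v] = set0.
  apply/setP => -[a b]; rewrite !inE /=.
  by apply/andP => -[abS /eqP av]; move: abS; rewrite av (negbTE (row_v_empty b)).
have := total2dom_row_col (v, w) domS; rewrite row0 set0D cards0 add0n.
by move/leq_trans; apply; exact/subset_leq_card/subD1set.
Qed.

Lemma total2dom_exists_row_ge3 : (forall w : 'I_m, exists v : 'I_n, (v, w) \in S) ->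
  exists v : 'I_n, 3 <= #|[set x in S | x.1 == v]|.
Proof.
move=> col_meets; apply/existsP; apply: contraLR small_S.
rewrite -leqNgt => /existsPn rows_le2.
rewrite -[m in 2 * m]card_ord; apply: (card_ge_of_fibres (f := snd)) => w.
have [v vwS] := col_meets w.
have row_le2 : #|[set y in S | y.1 == v]| <= 2 by rewrite leqNgt; exact: rows_le2.
have := total2dom_row_col (v, w) domS; move: row_le2.
rewrite (cardsD1 (v, w) [set y in S | y.1 == v]) (cardsD1 (v, w) [set y in S | y.2 == w]).
(* [set] merges convertible but syntactically distinct copies of each cardinal, which lia would treat as different atoms. *)
rewrite !inE vwS !eqxx /=; set r := #|_ :\ _|; set c := #|_ :\ _|; lia.
Qed.

End RookGraph.

Theorem lemma3 (n m : nat) (hn : 2 <= n) (hm : 2 <= m)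
  (hg : gamma2t n m < 2 * minn n m)
  (S : {set 'I_n * 'I_m}) (hS : total2dom S) (hcard : #|S| = gamma2t n m) :
  ((forall v : 'I_n, exists w : 'I_m, (v, w) \in S) /\
   (forall w : 'I_m, exists v : 'I_n, (v, w) \in S)) /\
  ((exists v : 'I_n, 3 <= #|[set x in S | x.1 == v]|) /\
   (exists w : 'I_m, 3 <= #|[set x in S | x.2 == w]|)).
Proof.
rewrite -hcard in hg.
have small_m : #|S| < 2 * m by apply: leq_trans hg _; rewrite leq_mul2l geq_minr orbT.
have small_n : #|transpose_set S| < 2 * n.
  by rewrite card_transpose_set; apply: leq_trans hg _; rewrite leq_mul2l geq_minl orbT.
have domT := total2dom_transpose hS.
have rows_meet := total2dom_row_meets hS small_m.
have cols_meet (w : 'I_m) : exists v : 'I_n, (v, w) \in S.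
  by have [v] := total2dom_row_meets domT small_n w; rewrite mem_transpose_set; exists v.
split; first by split.
split; first exact: total2dom_exists_row_ge3.
have cols_meetT (v : 'I_n) : exists w : 'I_m, (w, v) \in transpose_set S.
  by have [w] := rows_meet v; exists w; rewrite mem_transpose_set.
have [w row_w] := total2dom_exists_row_ge3 domT small_n cols_meetT.
by exists w; rewrite transpose_setI card_transpose_set in row_w.
Qed.
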